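(* Let $n\ge3$. If $W\in G^{\mathbb{R}}(2,\mathbb{C}^n)$ is not a complex line, then the orbit $\mathrm{U}(n)\cdot W$ has the transitivity property.
   Context: $G^{\mathbb{R}}(2,\mathbb{C}^n)$ is the Grassmannian of real $2$-planes in $\mathbb{C}^n=\mathbb{R}^{2n}$. A set $\mathbb{G}$ of real planes has the transitivity property if for any two vectors $x,y\in\mathbb{C}^n$ there exist $W_1,\dots,W_k\in\mathbb{G}$ with $x\in W_1$, $y\in W_k$ and $\dim_{\mathbb{R}}(W_i\cap W_{i+1})>0$ for $i=1,\dots,k-1$. *)

From HB Require Import structures.
From mathcomp Require Import all_boot all_order all_algebra.
From mathcomp Require Import reals complex.
Set Implicit Arguments. Unset Strict Implicit. Unset Printing Implicit Defensive.
Import Order.TTheory GRing.Theory Num.Theory.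
Local Open Scope ring_scope.
Local Open Scope complex_scope.

Section Defs.
Variables (R : realType) (n : nat).

Definition cvset := 'cV[R[i]]_n -> Prop.

Definition rspan2 (u v : 'cV[R[i]]_n) : cvset :=
  fun x => exists a b : R, x = a%:C *: u + b%:C *: v.

Definition r_indep (u v : 'cV[R[i]]_n) : Prop :=
  forall a b : R, a%:C *: u + b%:C *: v = 0 -> a = 0 /\ b = 0.

Definition real_2plane (W : cvset) : Prop :=
  exists u v, r_indep u v /\ forall x, W x <-> rspan2 u v x.

Definition complex_line (W : cvset) : Prop :=
  exists u : 'cV[R[i]]_n, u != 0 /\ forall x, W x <-> exists c : R[i], x = c *: u.

Definition unitary (A : 'M[R[i]]_n) : Prop :=
  A *m (map_mx (@conjc R) A)^T = 1%:M.

Definition mx_image (A : 'M[R[i]]_n) (W : cvset) : cvset :=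
  fun x => exists w, W w /\ x = A *m w.

Definition Un_orbit (W : cvset) : cvset -> Prop :=
  fun P => exists A, unitary A /\ forall x, P x <-> mx_image A W x.

(* transitivity property of a set G of real planes: W_0, ..., W_k in G with
   x in W_0, y in W_k and dim_R (W_i cap W_{i+1}) > 0, i.e. the intersection
   contains a nonzero vector *)
Definition transitivity_property (G : cvset -> Prop) : Prop :=
  forall x y : 'cV[R[i]]_n,
    exists (k : nat) (Ws : nat -> cvset),
      (forall i, (i <= k)%N -> G (Ws i)) /\ Ws 0%N x /\ Ws k y /\
      (forall i, (i < k)%N -> exists z, z != 0 /\ Ws i z /\ Ws i.+1 z).

End Defs.

(* Write W as the real span of unit vectors e, f with <f, e> = i kap purely
   imaginary; as W is not a complex line, kap^2 < 1.  U(n) acts transitively on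
   pairs of unit vectors with a prescribed Hermitian product, so unit vectors
   a, w with <w, a> = i kap lie in a common plane of the orbit.  If a, b are unit
   vectors with real product c >= kap^2 and m is a unit normal to both, then
   w = i s (a + b) + nu m, for suitable real s and nu, has <w, a> = <w, b> = i kap
   and links a to b.  Passing through the normalised midpoint of a and b turns a
   threshold t on c into 2 t^2 - 1, so finitely many halvings link every
   orthonormal pair; as n >= 3, any two vectors are then joined through a unit
   vector orthogonal to both. *)

From HB Require Import structures.
From mathcomp Require Import all_boot all_order all_algebra.
From mathcomp Require Import reals complex spectral sesquilinear.
From mathcomp Require Import ring lra zify.
Set Implicit Arguments. Unset Strict Implicit. Unset Printing Implicit Defensive.
Import Order.TTheory GRing.Theory Num.Theory.
Local Open Scope ring_scope.
Local Open Scope complex_scope.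

Lemma complexP (R : Type) (x y : R[i]) :
  complex.Re x = complex.Re y -> complex.Im x = complex.Im y -> x = y.
Proof. by case: x y => [a b] [c d] /= -> ->. Qed.

Lemma conjc_iR (R : realType) (k : R) : conjc ('i * k%:C) = - ('i * k%:C).
Proof. by apply: complexP => /=; ring. Qed.

Lemma mul_iR_conjc (R : realType) (k : R) :
  'i * k%:C * conjc ('i * k%:C) = (k ^+ 2)%:C.
Proof. by apply: complexP => /=; ring. Qed.

Section HermitianProduct.
Variables (R : realType) (n : nat).
Local Notation vec := 'cV[R[i]]_n.
Implicit Types (a b c p q : vec) (k : R[i]).

(* Locked, since unfolding [dotmx] during unification is prohibitively slow. *)
Definition dot_def a b : R[i] := dotmx a^T b^T.
Fact dot_key : unit. Proof. by []. Qed.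
Definition dot := locked_with dot_key dot_def.
Canonical dot_unlockable := [unlockable fun dot].

Lemma dotmx_tr a b : dotmx a^T b^T = dot a b.
Proof. by rewrite unlock. Qed.

Lemma dotDl a b c : dot (a + b) c = dot a c + dot b c.
Proof. by rewrite -!dotmx_tr linearD linearDl. Qed.

Lemma dotZl k a b : dot (k *: a) b = k * dot a b.
Proof. by rewrite -!dotmx_tr linearZ linearZl_LR. Qed.

Lemma dotC a b : dot b a = conjc (dot a b).
Proof. by rewrite -!dotmx_tr [LHS]hermC expr0 mul1r. Qed.

Lemma dotDr a b c : dot a (b + c) = dot a b + dot a c.
Proof. by rewrite -!dotmx_tr linearD linearDr. Qed.

Lemma dotZr k a b : dot a (k *: b) = conjc k * dot a b.
Proof. by rewrite -!dotmx_tr linearZ linearZr_LR. Qed.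

Lemma dotBl a b c : dot (a - b) c = dot a c - dot b c.
Proof. by rewrite dotDl -scaleN1r dotZl mulN1r. Qed.

Lemma dotBr a b c : dot a (b - c) = dot a b - dot a c.
Proof. by rewrite -!dotmx_tr linearB linearBr. Qed.

Lemma dot_ge0 a : 0 <= dot a a.
Proof. by rewrite -dotmx_tr dnorm_ge0. Qed.

Lemma dot_eq0 a : (dot a a == 0) = (a == 0).
Proof. by rewrite -!dotmx_tr dnorm_eq0 trmx_eq0. Qed.

Lemma dot_real a : dot a a = (complex.Re (dot a a))%:C.
Proof. by rewrite RRe_real // ger0_real // dot_ge0. Qed.

Lemma unit_neq0 a : dot a a = 1 -> a != 0.
Proof. by move=> a1; rewrite -dot_eq0 a1 oner_neq0. Qed.

Definition nrm a : R := Num.sqrt (complex.Re (dot a a)).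

Definition normal a : vec := (nrm a)^-1%:C *: a.

Lemma nrm_gt0 a : a != 0 -> 0 < nrm a.
Proof.
move=> a0; rewrite sqrtr_gt0 -ltcR -dot_real rmorph0 lt_def dot_eq0 a0.
exact: dot_ge0.
Qed.

Lemma normal_unit a : a != 0 -> dot (normal a) (normal a) = 1.
Proof.
move=> /nrm_gt0 a0; rewrite dotZl dotZr conjc_real dot_real -!rmorphM.
have : nrm a ^+ 2 = complex.Re (dot a a).
  by rewrite sqr_sqrtr // -ler0c -dot_real dot_ge0.
by move=> <-; congr (_%:C); field; rewrite gt_eqF.
Qed.

Lemma normalK a : a != 0 -> a = (nrm a)%:C *: normal a.
Proof. by move=> /nrm_gt0 a0; rewrite scalerA -rmorphM mulfV ?gt_eqF ?scale1r. Qed.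

Lemma dot_proj_orth p q : dot p p = 1 -> dot (q - dot q p *: p) p = 0.
Proof. by move=> p1; rewrite dotBl dotZl p1 mulr1 subrr. Qed.

Lemma dot_proj_norm p q : dot p p = 1 ->
  dot (q - dot q p *: p) (q - dot q p *: p) = dot q q - dot q p * conjc (dot q p).
Proof. by move=> p1; rewrite !(dotBl, dotBr, dotZl, dotZr) p1 (dotC q p); ring. Qed.

Lemma proj_norm_lt1 p q : dot p p = 1 -> dot q q = 1 -> q - dot q p *: p != 0 ->
  dot q p * conjc (dot q p) < 1.
Proof.
move=> p1 q1 qp0.
by rewrite -subr_gt0 -[X in X - _]q1 -dot_proj_norm // lt_def dot_eq0 qp0 dot_ge0.
Qed.

End HermitianProduct.

Section UnitaryFrames.
Variables (R : realType) (n : nat).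
Local Notation C := R[i].
Local Notation vec := 'cV[C]_n.
Local Open Scope sesquilinear_scope.
Local Notation "B ^!" :=
  (orthomx Num.conj (mx_of_hermitian (hermitian1mx _)) B) : matrix_set_scope.

Lemma unitaryE (A : 'M[C]_n) : unitary A <-> A \is unitarymx.
Proof.
by split => [uA|/unitarymxP]; [apply/unitarymxP; rewrite -map_trmx | rewrite -map_trmx].
Qed.

Lemma unitarymx_extend m (V : 'M[C]_(m, n)) : V \is unitarymx ->
  exists2 M : 'M[C]_n, M \is unitarymx &
    forall i : 'I_m, exists2 j : 'I_n, val j = val i & row j M = row i V.
Proof.
move=> Vu; have E : (m + \rank V^!)%N = n.
  by rewrite rank_ortho mxrank_unitary // subnKC // -(mxrank_unitary Vu) rank_leq_col.
pose M := col_mx V (schmidt (row_base V^!%MS)).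
have Mu : M \is unitarymx.
  apply/unitarymxP; rewrite tr_col_mx map_row_mx mul_col_row.
  rewrite !(unitarymxP _) ?schmidt_unitarymx ?rank_leq_col //.
  move=> [:nsV]; rewrite !(orthomx1P _) -?scalar_mx_block //;
    [abstract: nsV|]; last by rewrite orthomx_sym.
  by rewrite eqmx_schmidt_free ?eq_row_base ?row_base_free // orthomx_sym.
have castK p q (Epq : p = q) (N : 'M[C]_(p, n)) :
  N \is unitarymx -> castmx (Epq, erefl n) N \is unitarymx by case: q / Epq.
exists (castmx (E, erefl n) M); first exact: castK.
move=> i; exists (cast_ord E (lshift _ i)) => //.
by apply/rowP => k; rewrite !mxE castmxE cast_ordK cast_ord_id col_mxEu.
Qed.

Lemma unitary_frame2 (i0 i1 : 'I_n) (e1 e2 : vec) :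
  val i0 = 0%N -> val i1 = 1%N ->
  dot e1 e1 = 1 -> dot e2 e2 = 1 -> dot e2 e1 = 0 ->
  exists2 U : 'M[C]_n, U \is unitarymx &
    U *m delta_mx i0 0 = e1 /\ U *m delta_mx i1 0 = e2.
Proof.
move=> i00 i11 e11 e22 e21.
pose V : 'M[C]_(2, n) := \matrix_(i, k) (if val i == 0%N then e1 else e2) k 0.
have rowV i : row i V = (if val i == 0%N then e1 else e2)^T.
  by apply/rowP => k; rewrite !mxE.
have Vu : V \is unitarymx.
  apply/row_unitarymxP => i j; rewrite !rowV dotmx_tr.
  case: i j => [[|[|//]] ?] [[|[|//]] ?] //=.
  by rewrite dotC e21 conjc0.
have [M Mu Mrow] := unitarymx_extend Vu.
have colM (i : 'I_2) (j : 'I_n) : val j = val i ->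
    M^T *m delta_mx j 0 = if val i == 0%N then e1 else e2.
  move=> ji; have [j' j'i Mj'] := Mrow i.
  by rewrite -colE -[col _ _]trmxK tr_col trmxK (_ : j = j') ?Mj' ?rowV ?trmxK //;
    apply: val_inj; rewrite ji j'i.
exists M^T; first by rewrite trmx_unitary.
by split; [apply: (colM 0) | apply: (colM 1)].
Qed.

Lemma unitary_move2 (e1 e2 a b : vec) : (2 <= n)%N ->
  dot e1 e1 = 1 -> dot e2 e2 = 1 -> dot e2 e1 = 0 ->
  dot a a = 1 -> dot b b = 1 -> dot b a = 0 ->
  exists A, unitary A /\ A *m e1 = a /\ A *m e2 = b.
Proof.
move=> n2 e11 e22 e21 aa bb ba.
have n0 : (0 < n)%N by apply: leq_trans n2.
pose i0 := Ordinal n0; pose i1 := Ordinal n2.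
have [Ue Ueu [Ue1 Ue2]] := @unitary_frame2 i0 i1 e1 e2 erefl erefl e11 e22 e21.
have [Ua Uau [Ua1 Ua2]] := @unitary_frame2 i0 i1 a b erefl erefl aa bb ba.
have UeK : Ue^t* *m Ue = 1%:M.
  by move: Ueu; rewrite -trmxC_unitary => /unitarymxP; rewrite trmxCK.
exists (Ua *m Ue^t*); split.
  by apply/unitaryE; rewrite mul_unitarymx ?trmxC_unitary.
rewrite -Ue1 -Ue2 -Ua1 -Ua2.
by split; rewrite !mulmxA -(mulmxA Ua) UeK mulmx1.
Qed.

Lemma unitary_move_pair (e f a w : vec) : (2 <= n)%N ->
  dot e e = 1 -> dot f f = 1 -> dot a a = 1 -> dot w w = 1 ->
  dot w a = dot f e -> f - dot f e *: e != 0 ->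
  exists A, unitary A /\ A *m e = a /\ A *m f = w.
Proof.
move=> n2 e1 f1 a1 w1 wa fe0.
have ortho (x y : vec) : dot x x = 1 -> dot (normal (y - dot y x *: x)) x = 0.
  by move=> x1; rewrite dotZl dot_proj_orth // mulr0.
have same_norm : dot (w - dot w a *: a) (w - dot w a *: a) =
                 dot (f - dot f e *: e) (f - dot f e *: e).
  by rewrite (dot_proj_norm w a1) (dot_proj_norm f e1) wa w1 f1.
have wa0 : w - dot w a *: a != 0 by rewrite -dot_eq0 same_norm dot_eq0.
have [A [uA [Ae Ag]]] := unitary_move2 n2 e1 (normal_unit fe0) (ortho e f e1)
  a1 (normal_unit wa0) (ortho a w a1).
exists A; split => //; split => //.
have Af : A *m (f - dot f e *: e) = w - dot w a *: a.
  by rewrite (normalK fe0) (normalK wa0) -scalemxAr Ag /nrm same_norm.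
by rewrite -[f](subrK (dot f e *: e)) mulmxDr Af -scalemxAr Ae -wa subrK.
Qed.

Lemma exists_unit_orthogonal2 (a b : vec) : (3 <= n)%N ->
  exists z, dot z z = 1 /\ dot z a = 0 /\ dot z b = 0.
Proof.
move=> n3; pose V := col_mx a^T b^T.
have : (V^! != 0)%MS.
  by rewrite -mxrank_eq0 rank_ortho -lt0n subn_gt0 (leq_ltn_trans (rank_leq_row V)).
case/rowV0Pn => v /orthomx1P; rewrite tr_col_mx map_row_mx mul_mx_row.
rewrite -[0]hsubmxK => /eq_row_mx[va vb] v0.
have orth w : v *m w^T^t* = 0 -> dot (normal v^T) w = 0.
  by move=> vw; rewrite dotZl -dotmx_tr trmxK dotmxE vw mxE mulr0.
exists (normal v^T); split; first by rewrite normal_unit ?trmx_eq0.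
by split; apply: orth; [rewrite va linear0 | rewrite vb linear0].
Qed.

End UnitaryFrames.

Section PlaneChains.
Variables (R : realType) (n : nat) (G : cvset R n -> Prop).
Local Notation vec := 'cV[R[i]]_n.

Definition plane_chain (x y : vec) : Prop :=
  exists (k : nat) (Ws : nat -> cvset R n),
    (forall i, (i <= k)%N -> G (Ws i)) /\ Ws 0%N x /\ Ws k y /\
    (forall i, (i < k)%N -> exists z, z != 0 /\ Ws i z /\ Ws i.+1 z).

Lemma plane_chain_in P x y : G P -> P x -> P y -> plane_chain x y.
Proof. by move=> GP Px Py; exists 0%N, (fun _ => P). Qed.

Lemma plane_chain_trans x y z :
  plane_chain x y -> plane_chain y z -> y != 0 -> plane_chain x z.
Proof.
move=> [k1 [W1 [G1 [x1 [y1 l1]]]]] [k2 [W2 [G2 [y2 [z2 l2]]]]] y0.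
exists (k1 + k2.+1)%N, (fun i => if (i <= k1)%N then W1 i else W2 (i - k1.+1)%N).
split; first by move=> i ik; case: ifP => ik1; [exact: G1 | apply: G2; lia].
split; first by rewrite leq0n.
split.
  rewrite (_ : (k1 + k2.+1 <= k1)%N = false); last by lia.
  by rewrite (_ : (k1 + k2.+1 - k1.+1)%N = k2) //; lia.
move=> i ik; case: (ltngtP i k1) => [ik1|k1i|->]; first exact: l1.
  rewrite (_ : (i.+1 - k1.+1 = (i - k1.+1).+1)%N); last by lia.
  by apply: l2; lia.
by exists y; rewrite ?leqnn ?ltnn ?subnn.
Qed.

Lemma plane_chain_scale x y (r s : R) :
  (forall P, G P -> forall (t : R) w, P w -> P (t%:C *: w)) ->
  plane_chain x y -> plane_chain (r%:C *: x) (s%:C *: y).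
Proof.
move=> Gscale [k [Ws [GW [x0 [yk l]]]]]; exists k, Ws.
by split=> //; split; [|split]; [apply: Gscale x0 | apply: Gscale yk | ]; auto.
Qed.

End PlaneChains.

Lemma Un_orbit_image (R : realType) (n : nat) (W : cvset R n) A :
  unitary A -> Un_orbit W (mx_image A W).
Proof. by exists A. Qed.

Lemma Un_orbit_scale (R : realType) (n : nat) (W : cvset R n) :
  (forall (t : R) w, W w -> W (t%:C *: w)) ->
  forall P, Un_orbit W P -> forall (t : R) x, P x -> P (t%:C *: x).
Proof.
move=> Wscale P [A [uA PA]] t x /PA [w [Ww ->]]; apply/PA.
by exists (t%:C *: w); rewrite -scalemxAr; split => //; apply: Wscale.
Qed.

Section RealPlanes.
Variables (R : realType) (n : nat).
Local Notation vec := 'cV[R[i]]_n.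

Lemma real_2plane_scale (W : cvset R n) : real_2plane W ->
  forall (t : R) w, W w -> W (t%:C *: w).
Proof.
move=> [u [v [_ W_span]]] t w /W_span [a [b ->]]; apply/W_span.
by exists (t * a), (t * b); rewrite scalerDr !scalerA !rmorphM.
Qed.

Lemma rspan2_complex_line (u v e : vec) (nu dr di : R) :
  nu != 0 -> di != 0 -> u = nu%:C *: e -> v = (dr%:C + 'i * di%:C) *: e ->
  forall x, rspan2 u v x <-> exists c : R[i], x = c *: e.
Proof.
move=> nu0 di0 -> -> x; split => [[a [b ->]]|[c ->]].
  by exists (a%:C * nu%:C + b%:C * (dr%:C + 'i * di%:C)); rewrite !scalerA scalerDl.
pose b := complex.Im c / di.
exists ((complex.Re c - b * dr) / nu), b.
rewrite !scalerA -scalerDl [X in _ = X *: e](_ : _ = c) //.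
by apply: complexP => /=; rewrite /b; field; rewrite di0 nu0.
Qed.

(* [e] normalises [u], and [f] normalises the component of [v] that is
   orthogonal to [e] for the real inner product [Re (dot _ _)]. *)
Lemma real_2plane_frame (W : cvset R n) : real_2plane W -> ~ complex_line W ->
  exists (e f : vec) (kap : R),
    [/\ W e, W f, dot e e = 1, dot f f = 1 & dot f e = 'i * kap%:C] /\
    f - dot f e *: e != 0.
Proof.
move=> [u [v [uv W_span]]] not_cl.
have Wlin (a b : R) : W (a%:C *: u + b%:C *: v) by apply/W_span; exists a, b.
have u0 : u != 0.
  apply/eqP => u0; have [] := uv 1 0.
    by rewrite u0 scaler0 scale0r addr0.
  by move=> /eqP; rewrite oner_eq0.
pose e := normal u; pose g := complex.Re (dot v e); pose v' := v - g%:C *: e.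
have v'E : v' = (- (g / nrm u))%:C *: u + 1%:C *: v.
  by rewrite /v' /e /normal scalerA -rmorphM scale1r rmorphN scaleNr addrC.
have v'0 : v' != 0.
  apply/eqP => v'0; have [] := uv (- (g / nrm u)) 1.
    by rewrite -v'E.
  by move=> _ /eqP; rewrite oner_eq0.
pose f := normal v'; pose kap := complex.Im (dot v e) / nrm v'.
have e1 : dot e e = 1 by apply: normal_unit.
have f1 : dot f f = 1 by apply: normal_unit.
have fe : dot f e = 'i * kap%:C.
  rewrite /f /normal dotZl /v' dotBl dotZl e1 mulr1 {1}[dot v e]complexE.
  by apply: complexP => /=; rewrite /kap; ring.
exists e, f, kap; split.
  split => //.
    by have := Wlin (nrm u)^-1 0; rewrite scale0r addr0.
  by rewrite /f /normal v'E scalerDr !scalerA -!rmorphM; apply: Wlin.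
apply/eqP => fe0; apply: not_cl; exists e; split; first exact: unit_neq0 e1.
have fE := subr0_eq fe0; rewrite fe in fE.
have kap0 : kap != 0.
  by apply: contra_neq (unit_neq0 f1) => k0; rewrite fE k0 mulr0 scale0r.
move=> x; rewrite W_span.
apply: (rspan2_complex_line (nu := nrm u) (dr := g) (di := nrm v' * kap)).
- by rewrite gt_eqF // nrm_gt0.
- by apply: mulf_neq0 => //; rewrite gt_eqF // nrm_gt0.
- exact: normalK.
- rewrite -[v](subrK (g%:C *: e)) -/v' {1}(normalK v'0) -/f fE scalerA -scalerDl.
  by congr (_ *: _); apply: complexP => /=; ring.
Qed.

End RealPlanes.

Section LinkedPairs.
Variables (R : realType) (n : nat) (W : cvset R n) (e f : 'cV[R[i]]_n) (kap : R).
Hypothesis n3 : (3 <= n)%N.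
Hypothesis W_scale : forall (t : R) w, W w -> W (t%:C *: w).
Hypotheses (We : W e) (Wf : W f) (e1 : dot e e = 1) (f1 : dot f f = 1).
Hypotheses (fe : dot f e = 'i * kap%:C) (fe0 : f - dot f e *: e != 0).
Local Notation vec := 'cV[R[i]]_n.
Local Notation link := (plane_chain (Un_orbit W)).

Lemma kap_lt1 : kap ^+ 2 < 1.
Proof. by have := proj_norm_lt1 e1 f1 fe0; rewrite fe mul_iR_conjc ltcR. Qed.

Lemma orbit_plane_through (a w : vec) :
  dot a a = 1 -> dot w w = 1 -> dot w a = 'i * kap%:C ->
  exists P, [/\ Un_orbit W P, P a & P w].
Proof.
move=> a1 w1 wa.
have wa' : dot w a = dot f e by rewrite wa fe.
have [A [uA [Ae Af]]] := unitary_move_pair (ltnW n3) e1 f1 a1 w1 wa' fe0.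
by exists (mx_image A W); split; [exact: Un_orbit_image | exists e | exists f].
Qed.

Definition links_above (t : R) : Prop :=
  forall a b m : vec, dot a a = 1 -> dot b b = 1 -> dot m m = 1 ->
    dot a m = 0 -> dot b m = 0 ->
  forall c : R, dot b a = c%:C -> t <= c -> link a b.

Lemma links_above_le t t' : t <= t' -> links_above t -> links_above t'.
Proof.
move=> tt' linked a b m a1 b1 m1 am bm c ba t'c.
exact: linked a1 b1 m1 am bm c ba (le_trans tt' t'c).
Qed.

Lemma links_above_kap2 : links_above (kap ^+ 2).
Proof.
move=> a b m a1 b1 m1 am bm c ba kc.
have c1 : 0 < 1 + c by have k0 : 0 <= kap ^+ 2 := sqr_ge0 kap; lra.
have c10 : 1 + c != 0 by rewrite gt_eqF.
pose s := kap / (1 + c).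
have nu_ge0 : 0 <= 1 - 2 * kap ^+ 2 / (1 + c).
  by rewrite subr_ge0 ler_pdivrMr // mul1r mulr_natl mulr2n lerD // ltW // kap_lt1.
pose nu := Num.sqrt (1 - 2 * kap ^+ 2 / (1 + c)).
have nu2 : nu ^+ 2 = 1 - 2 * kap ^+ 2 / (1 + c) by rewrite sqr_sqrtr.
have ma : dot m a = 0 by rewrite dotC am conjc0.
have mb : dot m b = 0 by rewrite dotC bm conjc0.
have ab : dot a b = c%:C by rewrite dotC ba conjc_real.
pose w := ('i * s%:C) *: (a + b) + nu%:C *: m.
have wa : dot w a = 'i * kap%:C.
  rewrite /w dotDl !dotZl dotDl a1 ba ma mulr0 addr0 /s.
  by apply: complexP => /=; field.
have wb : dot w b = 'i * kap%:C.
  rewrite /w dotDl !dotZl dotDl b1 ab mb mulr0 addr0 /s.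
  by apply: complexP => /=; field.
have w1 : dot w w = 1.
  rewrite /w !(dotDl, dotDr, dotZl, dotZr) a1 b1 ab ba am bm ma mb m1.
  rewrite !(mulr0, addr0, add0r, mulr1) conjc_real conjc_iR.
  rewrite -rmorphM /= -expr2 nu2 /s.
  by apply: complexP => /=; field.
have [Pa [Pa_orbit Pa_a Pa_w]] := orbit_plane_through a1 w1 wa.
have [Pb [Pb_orbit Pb_b Pb_w]] := orbit_plane_through b1 w1 wb.
exact: plane_chain_trans (plane_chain_in Pa_orbit Pa_a Pa_w)
                         (plane_chain_in Pb_orbit Pb_w Pb_b) (unit_neq0 w1).
Qed.

Lemma links_above_step t : 0 < t -> links_above t -> links_above (2 * t ^+ 2 - 1).
Proof.
move=> t0 linked a b m a1 b1 m1 am bm c ba tc.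
have c1 : 0 < 1 + c by nra.
have ab : dot a b = c%:C by rewrite dotC ba conjc_real.
pose r := Num.sqrt (2 + 2 * c).
have r_gt0 : 0 < r by rewrite sqrtr_gt0; lra.
have r0 : r != 0 by rewrite gt_eqF.
have r2 : r ^+ 2 = 2 + 2 * c by rewrite sqr_sqrtr //; lra.
pose h := (r^-1)%:C *: (a + b).
have h1 : dot h h = 1.
  rewrite /h dotZl dotZr !(dotDl, dotDr) a1 b1 ab ba conjc_real -!rmorphD -!rmorphM.
  suff -> : r^-1 * (r^-1 * (1 + c + (c + 1))) = 1 by rewrite rmorph1.
  by rewrite (_ : 1 + c + (c + 1) = r ^+ 2); [field | rewrite r2; ring].
have ha : dot h a = ((1 + c) / r)%:C.
  by rewrite /h dotZl dotDl a1 ba -rmorphD -rmorphM mulrC.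
have bh : dot b h = ((1 + c) / r)%:C.
  by rewrite /h dotZr dotDr b1 ba conjc_real -rmorphD -rmorphM mulrC (addrC c).
have hm : dot h m = 0 by rewrite /h dotZl dotDl am bm addr0 mulr0.
have t_le : t <= (1 + c) / r by rewrite ler_pdivlMr //; nra.
exact: plane_chain_trans (linked a h m a1 h1 m1 am hm _ ha t_le)
                         (linked h b m h1 b1 m1 hm bm _ bh t_le) (unit_neq0 h1).
Qed.

Lemma links_above_iter k : links_above (Num.max 0 (1 - 2 ^+ k * (1 - kap ^+ 2))).
Proof.
elim: k => [|k IHk].
  rewrite expr0 mul1r (_ : 1 - (1 - kap ^+ 2) = kap ^+ 2) ?max_r ?sqr_ge0 //.
    exact: links_above_kap2.
  by ring.
set X := 2 ^+ k * (1 - kap ^+ 2) in IHk.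
have X0 : 0 <= X by rewrite mulr_ge0 ?exprn_ge0 // subr_ge0 ltW // kap_lt1.
case: (lerP (1 - X) 0) => [X1|X1].
  by apply: links_above_le IHk; rewrite (max_l X1) le_max lexx.
rewrite max_r ?ltW // in IHk.
apply: links_above_le (links_above_step X1 IHk).
rewrite [2 ^+ k.+1]exprS -mulrA -/X le_max; apply/orP; right; nra.
Qed.

Lemma links_above0 : links_above 0.
Proof.
pose d := 1 - kap ^+ 2.
have d0 : 0 < d by rewrite subr_gt0 kap_lt1.
pose k := Num.Def.archi_bound d^-1.
have hk : d^-1 < k%:R by apply: archi_boundP; rewrite invr_ge0 ltW.
have k2 : (k%:R : R) <= 2 ^+ k by rewrite -natrX ler_nat ltnW // ltn_expl.
have dd : d^-1 * d = 1 by rewrite mulVf // gt_eqF.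
rewrite (_ : 0 = Num.max 0 (1 - 2 ^+ k * d)); first exact: links_above_iter.
by rewrite max_l //; nra.
Qed.

Lemma link_orthonormal a b : dot a a = 1 -> dot b b = 1 -> dot b a = 0 -> link a b.
Proof.
move=> a1 b1 ba; have [m [m1 [ma mb]]] := exists_unit_orthogonal2 a b n3.
have am : dot a m = 0 by rewrite dotC ma conjc0.
have bm : dot b m = 0 by rewrite dotC mb conjc0.
by apply: (links_above0 a1 b1 m1 am bm (c := 0)); rewrite ?ba.
Qed.

Lemma link_all x y : link x y.
Proof.
have unit_scale (z : vec) : exists z1 (r : R), dot z1 z1 = 1 /\ z = r%:C *: z1.
  have [->|z0] := eqVneq z 0; first by exists e, 0; rewrite scale0r.
  by exists (normal z), (nrm z); split; [exact: normal_unit | exact: normalK].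
have [x1 [r [x11 ->]]] := unit_scale x.
have [y1 [s [y11 ->]]] := unit_scale y.
have [z [z1 [zx zy]]] := exists_unit_orthogonal2 x1 y1 n3.
have yz : dot y1 z = 0 by rewrite dotC zy conjc0.
apply: plane_chain_scale; first exact: Un_orbit_scale.
exact: plane_chain_trans (link_orthonormal x11 z1 zx)
                         (link_orthonormal z1 y11 yz) (unit_neq0 z1).
Qed.

End LinkedPairs.

Theorem proposition11p7 (R : realType) (n : nat) (W : cvset R n) :
  (3 <= n)%N -> real_2plane W -> ~ complex_line W ->
  transitivity_property (Un_orbit W).
Proof.
move=> n3 W2 not_cl.
have [e [f [kap [[We Wf e1 f1 fe] fe0]]]] := real_2plane_frame W2 not_cl.
exact: link_all n3 (real_2plane_scale W2) We Wf e1 f1 fe fe0.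
Qed.
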